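(* Let $w\in F_2$ be a word in $x,y$ whose trace map $\psi_w$ is Big, and define words recursively by $v_1(x,y)=w(x,y)$, $v_{n+1}(x,y)=w(v_n(x,y),y)$. Then for every $n\ge 1$ the word map $v_n:\mathrm{SL}(2,\mathbb{C})^2\to\mathrm{SL}(2,\mathbb{C})$ is almost surjective, i.e. its image contains $\mathrm{SL}(2,\mathbb{C})\setminus\{-\mathrm{id}\}$.
   Context: For a word $w(x,y)$ there are polynomials $P_w(s,t,u)$, $Q_w(s,t,u)$ such that for all $x,y\in\mathrm{SL}(2,\mathbb{C})$: $\mathrm{tr}(w(x,y))=P_w(\mathrm{tr}\,x,\mathrm{tr}\,y,\mathrm{tr}\,xy)$ and $\mathrm{tr}(w(x,y)y)=Q_w(\mathrm{tr}\,x,\mathrm{tr}\,y,\mathrm{tr}\,xy)$. The trace map is $\psi_w(s,t,u)=(P_w(s,t,u),t,Q_w(s,t,u))$. For $a\in\mathbb{C}$, $\psi_a(s,u)=(P_w(s,a,u),Q_w(s,a,u))$ is Big if $\psi_a(\mathbb{C}^2)=\mathbb{C}^2\setminus T_a$ with $T_a$ finite; $\psi_w$ is Big if some $\psi_a$ is Big. *)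

From mathcomp Require Import all_boot all_order all_algebra.
From mathcomp Require Import complex.
From mathcomp Require Import reals.
Set Implicit Arguments. Unset Strict Implicit. Unset Printing Implicit Defensive.
Import Order.TTheory GRing.Theory Num.Theory.
Local Open Scope ring_scope.

(* Words in the free group F_2 = <x, y>, as group terms.  Any term denotes an
   element of F_2 and its word map only depends on that element. *)
Inductive word : Type :=
  | WX | WY | WOne | WMul of word & word | WInv of word.

Fixpoint subst_x (w u : word) : word :=
  match w with
  | WX => u
  | WY => WY
  | WOne => WOne
  | WMul a b => WMul (subst_x a u) (subst_x b u)
  | WInv a => WInv (subst_x a u)
  end.

(* v_n with v_0 = x, v_1 = w, v_{n+1} = w(v_n, y). *)
Definition iter_word (w : word) (n : nat) : word := iter n (fun v => subst_x w v) WX.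

Section Eval.
Variable C : comUnitRingType.

Fixpoint word_eval (w : word) (x y : 'M[C]_2) : 'M[C]_2 :=
  match w with
  | WX => x
  | WY => y
  | WOne => 1%:M
  | WMul a b => word_eval a x y *m word_eval b x y
  | WInv a => invmx (word_eval a x y)
  end.

Definition inSL2 (g : 'M[C]_2) : Prop := \det g = 1.

(* evaluation of a 3-variable polynomial P(s,t,u) represented as a nested
   univariate polynomial (outer variable s, then t, then u) *)
Definition eval3 (P : {poly {poly {poly C}}}) (s t u : C) : C :=
  (P.[(s%:P)%:P]).[t%:P].[u].

Definition trace_polys (w : word) (P Q : {poly {poly {poly C}}}) : Prop :=
  forall x y : 'M[C]_2, inSL2 x -> inSL2 y ->
    \tr (word_eval w x y) = eval3 P (\tr x) (\tr y) (\tr (x *m y)) /\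
    \tr (word_eval w x y *m y) = eval3 Q (\tr x) (\tr y) (\tr (x *m y)).
End Eval.

Section Big.
Variable C : fieldType.
Definition big_at (P Q : {poly {poly {poly C}}}) (a : C) : Prop :=
  exists T : seq (C * C), forall p : C * C,
    (exists s u : C, (eval3 P s a u, eval3 Q s a u) = p) <-> p \notin T.

Definition trace_map_big (w : word) : Prop :=
  exists P Q : {poly {poly {poly C}}},
    trace_polys w P Q /\ exists a : C, big_at P Q a.
End Big.

From mathcomp Require Import all_boot all_order all_algebra.
From mathcomp Require Import complex.
From mathcomp Require Import reals.
From mathcomp Require Import ring.
Import Order.TTheory GRing.Theory Num.Theory.
Local Open Scope ring_scope.
Set Implicit Arguments. Unset Strict Implicit.

(* Fix a with psi_a Big.  By induction on n, the pairs (tr v_n, tr (v_n y)) with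
   x, y in SL2 and tr y = a cover all of C^2 except finitely many points: for
   n = 0 every trace triple is realised (Fricke), and v_(n+1) = w(v_n, y) turns
   these pairs into their images under psi_a.  Given g <> +-1, choose q outside
   the finite exceptional set and different from +-a, and realise (tr g, q) by
   v = v_n(x, y).  Then v <> +-1, because tr (v y) = q <> +-a = tr (+-y), so v
   and g are non-scalar elements of SL2 with equal trace, hence conjugate; and
   conjugating x and y conjugates v_n(x, y). *)

Section Matrix2.
Variable R : comNzRingType.
Implicit Types (A B : 'M[R]_2) (a b c d : R).

Lemma ord2P (i : 'I_2) : i = 0 \/ i = 1.
Proof. by case: i => [[|[|//]] ?]; [left|right]; apply: val_inj. Qed.

Lemma sum_ord2 (F : 'I_2 -> R) : \sum_(i < 2) F i = F 0 + F 1.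
Proof. by rewrite !big_ord_recl big_ord0 addr0; congr (F _ + F _); apply: val_inj. Qed.

Lemma mulmx2E A B i j : (A *m B) i j = A i 0 * B 0 j + A i 1 * B 1 j.
Proof. by rewrite mxE sum_ord2. Qed.

Lemma mxtrace2 A : \tr A = A 0 0 + A 1 1.
Proof. exact: sum_ord2. Qed.

Lemma det2 A : \det A = A 0 0 * A 1 1 - A 0 1 * A 1 0.
Proof.
rewrite (expand_det_row _ 0) sum_ord2 /cofactor !det_mx11 !mxE /=.
have -> : lift (0 : 'I_2) (0 : 'I_1) = 1 by apply: val_inj.
have -> : lift (1 : 'I_2) (0 : 'I_1) = 0 by apply: val_inj.
by rewrite expr0 mul1r expr1 mulN1r mulrN.
Qed.

Lemma matrix2P A B : A 0 0 = B 0 0 -> A 0 1 = B 0 1 -> A 1 0 = B 1 0 ->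
  A 1 1 = B 1 1 -> A = B.
Proof.
move=> e00 e01 e10 e11; apply/matrixP => i j.
by case: (ord2P i) => ->; case: (ord2P j) => ->.
Qed.

Definition mx2 a b c d : 'M[R]_2 :=
  \matrix_(i, j) if i == 0 then (if j == 0 then a else b) else (if j == 0 then c else d).

Lemma mx2_00 a b c d : mx2 a b c d 0 0 = a. Proof. by rewrite mxE. Qed.
Lemma mx2_01 a b c d : mx2 a b c d 0 1 = b. Proof. by rewrite mxE. Qed.
Lemma mx2_10 a b c d : mx2 a b c d 1 0 = c. Proof. by rewrite mxE. Qed.
Lemma mx2_11 a b c d : mx2 a b c d 1 1 = d. Proof. by rewrite mxE. Qed.
Definition mx2E := (mx2_00, mx2_01, mx2_10, mx2_11).

End Matrix2.

Section WordMaps.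
Variable R : comUnitRingType.
Implicit Types (x y h : 'M[R]_2) (u v : word).

Lemma word_eval_subst_x u v x y :
  word_eval (subst_x u v) x y = word_eval u (word_eval v x y) y.
Proof. by elim: u => //= [a -> b ->|a ->]. Qed.

Lemma word_eval_iterS w n x y :
  word_eval (iter_word w n.+1) x y = word_eval w (word_eval (iter_word w n) x y) y.
Proof. by rewrite /iter_word iterS word_eval_subst_x. Qed.

Lemma SL2_unitmx x : inSL2 x -> x \in unitmx.
Proof. by rewrite /inSL2 unitmxE => ->; rewrite unitr1. Qed.

Lemma SL2_conj h x : h \in unitmx -> inSL2 x -> inSL2 (h *m x *m invmx h).
Proof.
rewrite unitmxE /inSL2 => hu hx.
by rewrite !det_mulmx det_inv hx mulr1 mulrV.
Qed.

Lemma word_eval_SL2 u x y : inSL2 x -> inSL2 y -> inSL2 (word_eval u x y).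
Proof.
rewrite /inSL2 => hx hy; elim: u => //= [|a ha b hb|a ha].
- by rewrite det1.
- by rewrite det_mulmx ha hb mulr1.
- by rewrite det_inv ha invr1.
Qed.

Lemma word_eval1 u : word_eval u 1%:M 1%:M = 1%:M :> 'M[R]_2.
Proof. by elim: u => //= [a -> b ->|a ->]; rewrite ?mulmx1 ?invmx1. Qed.

Lemma invmx_conj h x : h \in unitmx -> x \in unitmx ->
  invmx (h *m x *m invmx h) = h *m invmx x *m invmx h.
Proof.
move=> hu xu; have cu : h *m x *m invmx h \in unitmx.
  by rewrite !unitmx_mul hu xu unitmx_inv.
have inv_r : (h *m x *m invmx h) *m (h *m invmx x *m invmx h) = 1%:M.
  by rewrite !mulmxA mulmxKV // -(mulmxA h) mulmxV // mulmx1 mulmxV.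
by rewrite -[LHS]mulmx1 -inv_r mulKmx.
Qed.

Lemma word_eval_conj u h x y : h \in unitmx -> inSL2 x -> inSL2 y ->
  word_eval u (h *m x *m invmx h) (h *m y *m invmx h) = h *m word_eval u x y *m invmx h.
Proof.
move=> hu hx hy; elim: u => //= [|a ha b hb|a ha].
- by rewrite mulmx1 mulmxV.
- by rewrite ha hb !mulmxA mulmxKV.
- by rewrite ha invmx_conj // SL2_unitmx //; apply: word_eval_SL2.
Qed.

End WordMaps.

Section Similarity.
Variable K : fieldType.
Implicit Types A B : 'M[K]_2.

Definition companion2 A : 'M[K]_2 := mx2 0 (- \det A) 1 (\tr A).

(* Columns e and A e: when e is a cyclic vector of A, A acts on this basis by
   its companion matrix (Cayley-Hamilton). *)
Definition cyclic_mx A (e1 e2 : K) : 'M[K]_2 :=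
  mx2 e1 (A 0 0 * e1 + A 0 1 * e2) e2 (A 1 0 * e1 + A 1 1 * e2).

Lemma mulmx_cyclic_mx A e1 e2 : A *m cyclic_mx A e1 e2 = cyclic_mx A e1 e2 *m companion2 A.
Proof.
apply: matrix2P; rewrite /companion2 /cyclic_mx !mulmx2E !mx2E ?det2 ?mxtrace2; ring.
Qed.

Definition nonscalar A := [|| A 0 1 != 0, A 1 0 != 0 | A 0 0 != A 1 1].

Lemma cyclic_mx_unit A : nonscalar A -> exists e1 e2, cyclic_mx A e1 e2 \in unitmx.
Proof.
have cycE e1 e2 : (cyclic_mx A e1 e2 \in unitmx) =
    (e1 * (A 1 0 * e1 + A 1 1 * e2) - (A 0 0 * e1 + A 0 1 * e2) * e2 != 0).
  by rewrite unitmxE unitfE det2 !mx2E.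
have [a10|a10] := eqVneq (A 1 0) 0; last first.
  by exists 1, 0; rewrite cycE !(mulr1, mulr0, addr0, mul0r, subr0, mul1r).
have [a01|a01] := eqVneq (A 0 1) 0; last first.
  by exists 0, 1; rewrite cycE !(mulr1, mulr0, mul0r, mul1r, add0r, sub0r) oppr_eq0.
rewrite /nonscalar a10 a01 !eqxx /= => a00.
by exists 1, 1; rewrite cycE a10 a01 !(mulr1, mul0r, add0r, addr0) mul1r subr_eq0 eq_sym.
Qed.

Lemma similar_companion2 A : nonscalar A ->
  exists P, P \in unitmx /\ P *m companion2 A *m invmx P = A.
Proof.
case/cyclic_mx_unit=> e1 [e2 Pu]; exists (cyclic_mx A e1 e2); split=> //.
by rewrite -mulmx_cyclic_mx mulmxK.
Qed.

Lemma similar_nonscalar A B : nonscalar A -> nonscalar B ->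
  \tr A = \tr B -> \det A = \det B -> exists h, h \in unitmx /\ h *m A *m invmx h = B.
Proof.
move=> /similar_companion2[P [Pu defA]] /similar_companion2[Q [Qu defB]] trAB detAB.
have compAB : companion2 A = companion2 B by rewrite /companion2 trAB detAB.
have hu : Q *m invmx P \in unitmx by rewrite unitmx_mul Qu unitmx_inv.
exists (Q *m invmx P); split=> //.
have intertwine : Q *m invmx P *m A = B *m (Q *m invmx P).
  by rewrite -{1}defA -{1}defB compAB !mulmxA !mulmxKV.
by rewrite intertwine mulmxK.
Qed.

Lemma SL2_nonscalar A : inSL2 A -> A != 1%:M -> A != - 1%:M -> nonscalar A.
Proof.
rewrite /inSL2 det2 => detA A_neq1 A_neqN1; apply/negPn/negP.
rewrite /nonscalar !negb_or !negbK => /and3P[/eqP a01 /eqP a10 /eqP a00].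
have defA : A = (A 0 0)%:M by apply: matrix2P; rewrite !mxE ?a01 ?a10 ?a00.
move: detA; rewrite a01 mul0r subr0 -a00 -expr2 => /eqP; rewrite sqrf_eq1.
case/orP=> /eqP a00E; [move/eqP: A_neq1 | move/eqP: A_neqN1];
  by rewrite defA a00E ?raddfN.
Qed.

End Similarity.

Lemma SL2_pair_of_traces (C : numClosedFieldType) (s t u : C) :
  exists x y : 'M[C]_2,
    [/\ inSL2 x, inSL2 y, \tr x = s, \tr y = t & \tr (x *m y) = u].
Proof.
(* q is a root of X^2 + u X + 1, so tr (x y) = - q - q^-1 = u. *)
have two_neq0 : (2 : C) != 0 by rewrite pnatr_eq0.
pose d := sqrtC (u ^+ 2 - 4); pose q := (d - u) / 2.
have q_root : q ^+ 2 + u * q + 1 = 0.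
  have -> : q ^+ 2 + u * q + 1 = (d ^+ 2 - (u ^+ 2 - 4)) / 4 by rewrite /q; field.
  by rewrite sqrtCK subrr mul0r.
have q_neq0 : q != 0.
  by apply/eqP=> q0; move: q_root; rewrite q0 expr0n mulr0 !add0r; apply/eqP/oner_neq0.
exists (mx2 s 1 (-1) 0), (mx2 0 q (- q^-1) t).
rewrite /inSL2 !det2 !mxtrace2 !mulmx2E !mx2E; split.
- by rewrite mulr0 mulrN1 opprK add0r.
- by rewrite mul0r mulrN mulfV // opprK add0r.
- by rewrite addr0.
- by rewrite add0r.
- apply/eqP; rewrite -subr_eq0.
  have -> : s * 0 + 1 * - q^-1 + (-1 * q + 0 * t) - u = - (q ^+ 2 + u * q + 1) / q.
    by field.
  by rewrite q_root oppr0 mul0r.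
Qed.

Lemma exists_notin (R : numDomainType) (s : seq R) : exists q : R, q \notin s.
Proof.
pose S : R := \sum_(x <- s) `|x|; have S_ge0 : 0 <= S by rewrite sumr_ge0.
exists (1 + S); apply/negP => S1_in.
have : `|1 + S| <= S by rewrite [X in _ <= X](big_rem (1 + S)) //= lerDl sumr_ge0.
by rewrite ger0_norm ?addr_ge0 // gerDr ler10.
Qed.

Section IteratedWord.
Variable C : numClosedFieldType.
Variables (w : word) (P Q : {poly {poly {poly C}}}) (a : C).
Hypotheses (w_traces : trace_polys w P Q) (w_big : big_at P Q a).

Lemma iter_word_trace_pairs n : exists T : seq (C * C), forall t q, (t, q) \notin T ->
  exists x y : 'M[C]_2, [/\ inSL2 x, inSL2 y, \tr y = a,
    \tr (word_eval (iter_word w n) x y) = t &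
    \tr (word_eval (iter_word w n) x y *m y) = q].
Proof.
have [Tw psi_onto] := w_big.
pose psi p := (eval3 P p.1 a p.2, eval3 Q p.1 a p.2).
elim: n => [|n [T IH]].
  exists [::] => t q _.
  by have [x [y [hx hy tr_x tr_y tr_xy]]] := SL2_pair_of_traces t a q; exists x, y.
exists (Tw ++ map psi T) => t q.
rewrite mem_cat negb_or => /andP[/psi_onto[s [u psi_su]] tq_notin].
have su_notin : (s, u) \notin T.
  by apply: contra tq_notin => /(map_f psi); rewrite -psi_su.
have [x [y [hx hy tr_y tr_v tr_vy]]] := IH _ _ su_notin.
have [trP trQ] := w_traces (word_eval_SL2 (iter_word w n) hx hy) hy.
by exists x, y; split; rewrite // word_eval_iterS ?trP ?trQ tr_v tr_y tr_vy; case: psi_su.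
Qed.

Lemma iter_word_almost_surjective n (g : 'M[C]_2) : inSL2 g -> g <> - 1%:M ->
  exists x y : 'M[C]_2, inSL2 x /\ inSL2 y /\ word_eval (iter_word w n) x y = g.
Proof.
move=> hg /eqP g_neqN1; have [->|g_neq1] := eqVneq g 1%:M.
  by exists 1%:M, 1%:M; rewrite /inSL2 det1 word_eval1.
have [T HT] := iter_word_trace_pairs n.
have [q] := exists_notin ([:: a; - a] ++ map snd T).
rewrite mem_cat negb_or !inE negb_or => /andP[/andP[q_neq_a q_neq_Na] q_notin].
have /HT[x [y [hx hy tr_y tr_v tr_vy]]] : (\tr g, q) \notin T.
  by apply: contra q_notin => /(map_f snd).
set v := word_eval _ x y in tr_v tr_vy.
have hv : inSL2 v := word_eval_SL2 _ hx hy.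
have v_nonscalar : nonscalar v.
  apply: SL2_nonscalar => //.
  - by apply: contra_neq q_neq_a => v1; rewrite -tr_vy v1 mul1mx.
  - by apply: contra_neq q_neq_Na => vN1; rewrite -tr_vy vN1 mulNmx mul1mx linearN /= tr_y.
have g_nonscalar : nonscalar g by apply: SL2_nonscalar.
have [h [hu conj_v]] := similar_nonscalar v_nonscalar g_nonscalar tr_v (etrans hv (esym hg)).
exists (h *m x *m invmx h), (h *m y *m invmx h).
split; [exact: SL2_conj | split; [exact: SL2_conj | by rewrite word_eval_conj]].
Qed.
End IteratedWord.

Local Open Scope complex_scope.

Theorem corollary8p3 (R : realType) (w : word) :
  @trace_map_big R[i] w ->
  forall n : nat, (1 <= n)%N ->
  forall g : 'M[R[i]]_2, inSL2 g -> g <> - 1%:M ->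
  exists x y : 'M[R[i]]_2,
    inSL2 x /\ inSL2 y /\ word_eval (iter_word w n) x y = g.
Proof.
move=> [P [Q [w_traces [a w_big]]]] n _.
exact: iter_word_almost_surjective w_traces w_big n.
Qed.
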